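(* Let $\ell\in\{1,2\}$ and let $g\in O^+(\Lambda)$ satisfy $g(\mathbf e_\ell)=\mathbf e_\ell$. Then $\Phi_\ell(g\cdot u)^2=\Phi_\ell(u)^2$ for all $u\in\mathbb M_\ell\otimes\mathbb R+i\,\mathcal C^+_{\mathbb M_\ell}$.
   Context: $\Lambda=\mathbb U(2)\oplus\mathbb U\oplus\mathbb E_8(2)$ ($\mathbb U$ the hyperbolic plane, $\mathbb E_8$ negative definite, $(2)$ scaling by 2); $\{\mathbf e_1,\mathbf f_1\}$ is the standard basis of the factor $\mathbb U$ and $\{\mathbf e_2,\mathbf f_2\}$ of the factor $\mathbb U(2)$. $\Omega_\Lambda^+$ is a component of $\{[\omega]:\omega^2=0,\langle\omega,\bar\omega\rangle>0\}\subset\mathbf P(\Lambda\otimes\mathbb C)$ and $O^+(\Lambda)$ the subgroup of $O(\Lambda)$ preserving it. $\mathbb M_\ell=\mathbb U(2/\ell)\oplus\mathbb E_8(2)$, so $\Lambda=(\mathbb Z\mathbf e_\ell+\mathbb Z\mathbf f_\ell)\oplus\mathbb M_\ell$; $\mathcal C^+_{\mathbb M_\ell}$ is the component of the positive cone of $\mathbb M_\ell$ such that $j_\ell(u)=[-(u^2/2)\mathbf e_\ell+\mathbf f_\ell/\ell+(-1)^{2/\ell}u]$ is an isomorphism $\mathbb M_\ell\otimes\mathbb R+i\mathcal C^+_{\mathbb M_\ell}\to\Omega_\Lambda^+$ (bases chosen with $\mathbf e_\ell,\mathbf f_\ell$ in the closure of $\mathcal C^+_{\mathbb M_{2/\ell}}$).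 $O^+(\Lambda)$ acts by $g\cdot u=j_\ell^{-1}(g(j_\ell(u)))$. With $c(n)$ defined by $\eta(\tau)^{-8}\eta(2\tau)^8\eta(4\tau)^{-8}=\sum_{n\ge-1}c(n)e^{2\pi in\tau}$, $\Phi_1(z)=\prod_{\lambda\in\mathbb M_1\cap\overline{\mathcal C}^+_{\mathbb M_1}\setminus\{0\}}\bigl(\frac{1-e^{\pi i\langle\lambda,z\rangle}}{1+e^{\pi i\langle\lambda,z\rangle}}\bigr)^{c(\lambda^2/2)}$ and $\Phi_2(w)=2^8e^{2\pi i\langle\mathbf e_1,w\rangle}\prod_{\lambda\in\mathbb Z_{>0}\mathbf e_1\cup\Pi^+}(1-e^{2\pi i\langle\lambda,w\rangle})^{(-1)^{\langle\lambda,\mathbf e_1-\mathbf f_1\rangle}c(\lambda^2/2)}$, $\Pi^+=\{\lambda\in\mathbb M_2:\langle\lambda,\mathbf e_1\rangle>0,\lambda^2\ge-2\}$, extended holomorphically to the tube domains. These satisfy $\Phi_\ell(g\cdot u)=\chi(g)J_\ell(g,u)^4\Phi_\ell(u)$ for $g\in O^+(\Lambda)$, with a character $\chi$ of order dividing 2 and $J_\ell(g,u)=\langle g(-(u^2/2)\mathbf e_\ell+\mathbf f_\ell/\ell+(-1)^{2/\ell}u),\mathbf e_\ell\rangle$. *)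

From mathcomp Require Import all_boot all_algebra.
From mathcomp Require Import complex reals.
Set Implicit Arguments. Unset Strict Implicit. Unset Printing Implicit Defensive.
Import GRing.Theory Num.Theory.
Local Open Scope ring_scope.

(* The lattice  Lambda = U(2) (+) U (+) E8(2)  in coordinates.              *)
(* Basis (indices 0..11):                                                   *)
(*   0 = e_2, 1 = f_2   (standard basis of the factor U(2)),                *)
(*   2 = e_1, 3 = f_1   (standard basis of the factor U),                   *)
(*   4..11 = simple roots a_1..a_8 of E8 (Bourbaki numbering), scaled      *)
(*           so that the form is -2 * (Cartan matrix of E8)  (E8 negative   *)
(*           definite, then scaled by 2).                                   *)

Definition e8_edge (k m : nat) : bool :=
  [|| (k == 0) && (m == 2), (k == 2) && (m == 3), (k == 3) && (m == 4),
      (k == 4) && (m == 5), (k == 5) && (m == 6), (k == 6) && (m == 7)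
    | (k == 1) && (m == 3)]%N.

Definition gram_entry (i j : nat) : int :=
  if (i < 2)%N && (j < 2)%N then (if i == j then 0 else 2)
  else if [&& (2 <= i < 4)%N & (2 <= j < 4)%N] then (if i == j then 0 else 1)
  else if (4 <= i)%N && (4 <= j)%N then
    (if i == j then -4
     else if e8_edge (i - 4) (j - 4) || e8_edge (j - 4) (i - 4) then 2 else 0)
  else 0.

Definition LamGram : 'M[int]_12 := \matrix_(i, j) gram_entry i j.

Notation Cx R := (R[i]).

Definition bil {R : realType} (x y : 'cV[Cx R]_12) : Cx R :=
  (x^T *m map_mx intr LamGram *m y) ord0 ord0.

Definition in_OLam (g : 'M[int]_12) : Prop := g^T *m LamGram *m g = LamGram.

Definition actL {R : realType} (g : 'M[int]_12) (x : 'cV[Cx R]_12) :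
  'cV[Cx R]_12 := map_mx intr g *m x.

Definition bvec {R : realType} (k : 'I_12) : 'cV[Cx R]_12 :=
  \col_(i < 12) (if i == k then 1 else 0).

(* indices of e_l, f_l, e_{2/l}, f_{2/l}  (l is 1 or 2) *)
Definition ie (l : nat) : 'I_12 := if l == 1%N then inord 2 else inord 0.
Definition if_ (l : nat) : 'I_12 := if l == 1%N then inord 3 else inord 1.
Definition ie' (l : nat) : 'I_12 := if l == 1%N then inord 0 else inord 2.
Definition if' (l : nat) : 'I_12 := if l == 1%N then inord 1 else inord 3.

(* M_l (x) C = orthogonal complement of Z e_l + Z f_l, i.e. vectors whose
   e_l and f_l coordinates vanish *)
Definition inM {R : realType} (l : nat) (u : 'cV[Cx R]_12) : Prop :=
  u (ie l) ord0 = 0 /\ u (if_ l) ord0 = 0.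

Definition projM {R : realType} (l : nat) (x : 'cV[Cx R]_12) : 'cV[Cx R]_12 :=
  \col_(i < 12) (if (i == ie l) || (i == if_ l) then 0 else x i ord0).

Definition ImV {R : realType} (u : 'cV[Cx R]_12) : 'cV[Cx R]_12 :=
  map_mx (fun z : Cx R => 'Im z) u.

(* C^+_{M_l}: the component of the positive cone of M_l (x) R whose closure
   contains e_{2/l} and f_{2/l}; in a Lorentzian space two positive vectors
   lie in the same component iff their product is positive. *)
Definition in_posCone {R : realType} (l : nat) (y : 'cV[Cx R]_12) : Prop :=
  0 < bil y y /\ 0 < bil y (bvec (ie' l) + bvec (if' l)).

Definition in_tube {R : realType} (l : nat) (u : 'cV[Cx R]_12) : Prop :=
  inM l u /\ in_posCone l (ImV u).

Definition sgn_l {R : realType} (l : nat) : Cx R :=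
  if l == 1%N then 1 else -1.

Definition jmap {R : realType} (l : nat) (u : 'cV[Cx R]_12) : 'cV[Cx R]_12 :=
  (- (bil u u / 2)) *: bvec (ie l) + (l%:R)^-1 *: bvec (if_ l)
  + sgn_l l *: u.

(* O^+(Lambda): elements of O(Lambda) preserving the component
   Omega^+ = { [j_l(u)] : u in the tube domain } *)
Definition in_OplusLam {R : realType} (l : nat) (g : 'M[int]_12) : Prop :=
  in_OLam g /\
  forall u : 'cV[Cx R]_12, in_tube l u ->
    exists (u' : 'cV[Cx R]_12) (c : Cx R),
      in_tube l u' /\ c != 0 /\ actL g (jmap l u) = c *: jmap l u'.

Definition Jfac {R : realType} (l : nat) (g : 'M[int]_12) (u : 'cV[Cx R]_12)
  : Cx R := bil (actL g (jmap l u)) (bvec (ie l)).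

(* g . u = j_l^{-1}(g(j_l(u))): since <j_l(v), e_l> = 1, one has
   j_l(g.u) = g(j_l(u)) / J_l(g,u), hence
   g.u = (-1)^{2/l} * proj_{M_l}(g(j_l(u))) / J_l(g,u). *)
Definition gact {R : realType} (l : nat) (g : 'M[int]_12) (u : 'cV[Cx R]_12)
  : 'cV[Cx R]_12 :=
  (sgn_l l / Jfac l g u) *: projM l (actL g (jmap l u)).

From mathcomp Require Import all_boot all_algebra.
From mathcomp Require Import complex reals.
Import GRing.Theory Num.Theory.
Local Open Scope ring_scope.

(* If g fixes e_l then J_l(g, u) = <g j_l(u), g e_l> = <j_l(u), e_l> = 1, so
   the automorphy factor disappears, and squaring the transformation law
   removes the character, which has order dividing 2. *)

Section FormOnLambda.

Variable R : realType.
Implicit Types (x y : 'cV[R[i]]_12) (g : 'M[int]_12).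

Lemma bil_bvecr x k : bil x (bvec k) = \sum_i x i ord0 * (gram_entry i k)%:~R.
Proof.
rewrite /bil mxE (bigD1 k) //= big1 => [|j /negbTE neq_jk]; last first.
  by rewrite !mxE neq_jk mulr0.
rewrite !mxE eqxx mulr1 addr0; apply: eq_bigr => i _; by rewrite !mxE.
Qed.

Lemma bil_actL g x y : in_OLam g -> bil (actL g x) (actL g y) = bil x y.
Proof.
move=> gO; rewrite /bil /actL trmx_mul map_trmx -!mulmxA.
rewrite (mulmxA (map_mx _ (trmx g))) -map_mxM (mulmxA (map_mx _ _)) -map_mxM.
by rewrite gO.
Qed.

End FormOnLambda.

Section HyperbolicPlane.

Variable l : nat.
Hypothesis l12 : l = 1%N \/ l = 2%N.

Lemma ie_neq_if : (ie l == if_ l) = false.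
Proof. by case: l12 => ->; rewrite /ie /if_ /eq_op /= !inordK. Qed.

Lemma gram_entry_fe : gram_entry (if_ l) (ie l) = l%:Z.
Proof. by case: l12 => ->; rewrite /ie /if_ /= !inordK. Qed.

Lemma gram_entry_e (i : 'I_12) : i != if_ l -> gram_entry i (ie l) = 0.
Proof.
case: l12 => ->; rewrite /ie /if_ /=; case: i => i lt_i12;
rewrite /eq_op /= !inordK //; do 12 (case: i lt_i12 => [|i] lt_i12 //).
Qed.

Lemma bil_jmap_e (R : realType) (u : 'cV[R[i]]_12) :
  inM l u -> bil (jmap l u) (bvec (ie l)) = 1.
Proof.
move=> [_ uf0]; rewrite bil_bvecr (bigD1 (if_ l)) //= big1 => [|i neq_if].
  rewrite addr0 !mxE eqxx uf0 mulr0 addr0 eq_sym ie_neq_if mulr0 add0r mulr1.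
  rewrite gram_entry_fe pmulrn mulVf //.
  by case: l12 => ->; rewrite pnatr_eq0.
by rewrite gram_entry_e // mulr0.
Qed.

Lemma Jfac_fixed_e (R : realType) (g : 'M[int]_12) (u : 'cV[R[i]]_12) :
  in_OLam g -> actL g (bvec (ie l)) = bvec (R := R) (ie l) -> inM l u ->
  Jfac l g u = 1.
Proof. by move=> gO ge uM; rewrite /Jfac -ge bil_actL // bil_jmap_e. Qed.

End HyperbolicPlane.

Theorem lemma2p3 (R : realType) (l : nat) (hl : l = 1%N \/ l = 2%N)
    (Phi : 'cV[R[i]]_12 -> R[i]) (chi : 'M[int]_12 -> R[i])
    (chi_mul : forall g h, in_OplusLam (R := R) l g -> in_OplusLam (R := R) l h ->
                 chi (g *m h) = chi g * chi h)
    (chi_sq : forall g, in_OplusLam (R := R) l g -> chi g ^+ 2 = 1)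
    (Phi_mod : forall g (u : 'cV[R[i]]_12), in_OplusLam (R := R) l g ->
                 in_tube l u ->
                 Phi (gact l g u) = chi g * Jfac l g u ^+ 4 * Phi u)
    (g : 'M[int]_12) (hg : in_OplusLam (R := R) l g)
    (hge : actL g (bvec (ie l)) = bvec (R := R) (ie l)) :
  forall u : 'cV[R[i]]_12, in_tube l u -> Phi (gact l g u) ^+ 2 = Phi u ^+ 2.
Proof.
move=> u hu.
have J1 : Jfac l g u = 1 by apply: Jfac_fixed_e => //; [case: hg | case: hu].
by rewrite Phi_mod // J1 expr1n mulr1 exprMn chi_sq // mul1r.
Qed.
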